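(* Each of the matroids $Q_6$, $P_6$ and $U_{3,6}$ is an excluded minor for the class $\mathcal{Z}$.
   Context: $\mathcal{Z}$ is the class of matroids $M$ such that for every $e\in E(M)$, $M\backslash e$ or $M/e$ is binary. $P_6$ is the six-element rank-3 matroid whose only non-spanning circuit is a single triangle. $Q_6$ is the six-element rank-3 matroid whose non-spanning circuits are exactly two triangles sharing one element. An excluded minor for a minor-closed class is a matroid not in the class all of whose proper minors are in the class. *)

(* Matroids on a ground set E : {set T} (T a finType),
   given by their rank function r : {set T} -> nat (only values on subsets
   of E matter). *)
From HB Require Import structures.
From mathcomp Require Import all_boot all_order all_algebra.
Set Implicit Arguments. Unset Strict Implicit. Unset Printing Implicit Defensive.

Section Matroids.
Variable T : finType.

Definition is_matroid (E : {set T}) (r : {set T} -> nat) : Prop :=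
  [/\ forall X : {set T}, X \subset E -> r X <= #|X|,
      forall X Y : {set T}, X \subset Y -> Y \subset E -> r X <= r Y
    & forall X Y : {set T}, X \subset E -> Y \subset E ->
        r (X :|: Y) + r (X :&: Y) <= r X + r Y].

Definition del_rank (r : {set T} -> nat) : {set T} -> nat := r.
Definition con_rank (r : {set T} -> nat) (e : T) : {set T} -> nat :=
  fun X => r (e |: X) - r [set e].

Definition minor_ground (E C D : {set T}) : {set T} := E :\: (C :|: D).
Definition minor_rank (r : {set T} -> nat) (C : {set T}) : {set T} -> nat :=
  fun X => r (X :|: C) - r C.

Definition binary (E : {set T}) (r : {set T} -> nat) : Prop :=
  exists n : nat, exists phi : T -> 'rV['F_2]_n,
    forall X : {set T}, X \subset E -> r X = \rank (\sum_(x in X) <<phi x>>)%MS.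

Definition classZ (E : {set T}) (r : {set T} -> nat) : Prop :=
  forall e, e \in E -> binary (E :\ e) (del_rank r) \/ binary (E :\ e) (con_rank r e).

Definition excluded_minor
    (P : {set T} -> ({set T} -> nat) -> Prop) (E : {set T}) (r : {set T} -> nat) : Prop :=
  [/\ is_matroid E r, ~ P E r &
      forall C D : {set T}, C \subset E -> D \subset E -> [disjoint C & D] ->
        C :|: D != set0 -> P (minor_ground E C D) (minor_rank r C)].
End Matroids.

Definition tri1 : {set 'I_6} := [set inord 0; inord 1; inord 2].
Definition tri2 : {set 'I_6} := [set inord 2; inord 3; inord 4].

Definition rank_U36 (X : {set 'I_6}) : nat := minn #|X| 3.
(* P_6: rank 3, only non-spanning circuit is the triangle {0,1,2}. *)
Definition rank_P6 (X : {set 'I_6}) : nat := if X == tri1 then 2 else minn #|X| 3.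
(* Q_6: rank 3, non-spanning circuits exactly {0,1,2} and {2,3,4}. *)
Definition rank_Q6 (X : {set 'I_6}) : nat :=
  if (X == tri1) || (X == tri2) then 2 else minn #|X| 3.

From HB Require Import structures.
From mathcomp Require Import all_boot all_order all_algebra.
Set Implicit Arguments. Unset Strict Implicit. Unset Printing Implicit Defensive.
Import GRing.Theory.

(* The three matroids live on 'I_6, so every claim is a finite statement; the
   proof reduces each of them to a boolean check run by vm_compute, and its
   content lies in the soundness of these checks.
   - Binary matroids have no two non-parallel points sharing a fundamental
     circuit: over GF(2) a vector spanned minimally by an independent list is
     the sum of that list (minimal_span_sum).  Exhibiting such pairs in both
     M \ e and M / e shows that M is not in Z (witnesses_not_classZ).
   - Subsets of 'I_6 are coded by predicates on nat, on which the rank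
     functions compute.  The rank axioms are checked on all pairs of subsets
     (rank_axioms_check).
   - For every proper minor M / C \ D and element e of it, a candidate
     representation of the deletion or the contraction of e in GF(2)^3 is
     computed and checked to realise every rank (minors_check); GF(2)^3 is
     modelled by bit triples whose spans have computable dimension. *)

Section GF2.
Local Open Scope ring_scope.

Lemma F2_cases (a : 'F_2) : a = 0 \/ a = 1.
Proof. by case: a => [[|[|k]]] Hk; [left|right|]; try apply: val_inj. Qed.

Lemma addmx_F2 m n (v : 'M['F_2]_(m, n)) : v + v = 0.
Proof. by rewrite -mulr2n -scaler_nat (_ : 2%:R = 0 :> 'F_2) ?scale0r //; apply/eqP. Qed.

Lemma addmxK_F2 m n (v w : 'M['F_2]_(m, n)) : v + w + w = v.
Proof. by rewrite -addrA addmx_F2 addr0. Qed.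

Lemma sub_line_adds n k (v w : 'rV['F_2]_n) (S : 'M['F_2]_(k, n)) :
  (v <= <<w>> + S)%MS = (v <= S)%MS || ((v + w)%R <= S)%MS.
Proof.
apply/idP/idP => [/sub_addsmxP [[u1 u2] /= ->]|].
  have /sub_rVP [a ->] : (u1 *m <<w>> <= w)%MS by rewrite -(genmxE w) submxMl.
  have u2S : (u2 *m S <= S)%MS by rewrite submxMl.
  case: (F2_cases a) => ->; first by rewrite scale0r add0r u2S.
  by rewrite scale1r addrAC addmx_F2 add0r u2S orbT.
case/orP => [vS|vwS]; first exact: submx_trans vS (addsmxSr _ _).
by rewrite -(addmxK_F2 v w) addrC addmx_sub_adds ?genmxE.
Qed.

Lemma rank_line_adds n k (w : 'rV['F_2]_n) (S : 'M['F_2]_(k, n)) :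
  \rank (<<w>> + S)%MS = (\rank S + ~~ (w <= S)%MS)%N.
Proof.
have [wS|wNS] := boolP (w <= S)%MS.
  by rewrite addn0 (addsmx_idPr _) // genmxE.
apply/eqP; rewrite addn1 eqn_leq; apply/andP; split.
  rewrite (leq_trans (mxrank_adds_leqif _ _)) // mxrank_gen -[(\rank S).+1]add1n leq_add2r.
  exact: rank_leq_row.
apply: rank_ltmx; rewrite ltmxE addsmxSr addsmx_sub genmxE.
by rewrite (negbTE wNS).
Qed.
End GF2.

Section SpansOverF2.
Local Open Scope ring_scope.
Variables (T : eqType) (n : nat) (phi : T -> 'rV['F_2]_n).

Definition spanL (L : seq T) := (\sum_(y <- L) <<phi y>>)%MS.
Definition rankL (L : seq T) := \rank (spanL L).

Lemma spanL_cons y L : spanL (y :: L) = (<<phi y>> + spanL L)%MS.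
Proof. by rewrite /spanL big_cons. Qed.

Lemma rankL_cons x L : rankL (x :: L) = (rankL L + ~~ (phi x <= spanL L)%MS)%N.
Proof. by rewrite /rankL spanL_cons rank_line_adds. Qed.

Lemma rankL_le_size L : (rankL L <= size L)%N.
Proof.
elim: L => [|x L IH]; first by rewrite /rankL /spanL big_nil mxrank0.
by rewrite rankL_cons /= -[(size L).+1]addn1 leq_add // leq_b1.
Qed.

Lemma rankL_spanned x L : rankL (x :: L) = rankL L -> (phi x <= spanL L)%MS.
Proof. by rewrite rankL_cons -[RHS]addn0 => /addnI; case: (phi x <= _)%MS. Qed.

Lemma rankL_not_spanned x L :
  rankL (x :: L) = (size L).+1 -> ~~ (phi x <= spanL L)%MS.
Proof.
rewrite rankL_cons; case: (phi x <= _)%MS => //=; rewrite addn0 => rankL_big.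
by have := rankL_le_size L; rewrite rankL_big ltnn.
Qed.

Lemma minimal_span_sum L v : uniq L -> (v <= spanL L)%MS ->
  {in L, forall z, ~~ (v <= spanL (rem z L))%MS} -> v = \sum_(y <- L) phi y.
Proof.
elim: L v => [|y L IH] v; first by rewrite /spanL !big_nil submx0 => _ /eqP.
rewrite cons_uniq spanL_cons sub_line_adds => /andP [yNL uL] vS vmin.
have vNL : ~~ (v <= spanL L)%MS by have := vmin y (mem_head _ _); rewrite /= eqxx.
have vyS : ((v + phi y)%R <= spanL L)%MS by rewrite (negbTE vNL) in vS.
rewrite big_cons; suff <- : v + phi y = \sum_(y <- L) phi y by rewrite addrC addmxK_F2.
apply: IH => // z zL; have := vmin z (@mem_behead _ (y :: L) _ zL).
have yz : (y == z) = false by apply: contraNF yNL => /eqP ->.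
by rewrite /= yz spanL_cons sub_line_adds negb_or => /andP [].
Qed.

Lemma same_circuit_parallel B x y : uniq B ->
  rankL (x :: B) = rankL B -> rankL (y :: B) = rankL B ->
  {in B, forall z, rankL (x :: rem z B) = size B} ->
  {in B, forall z, rankL (y :: rem z B) = size B} ->
  (rankL [:: x; y] < 2)%N.
Proof.
move=> uB xB yB xmin ymin.
have sum_of u : rankL (u :: B) = rankL B ->
    {in B, forall z, rankL (u :: rem z B) = size B} -> phi u = \sum_(b <- B) phi b.
  move=> uS umin; apply: minimal_span_sum (rankL_spanned uS) _ => // z zB.
  have B_gt0 : (0 < size B)%N by rewrite -has_predT; apply/hasP; exists z.
  by apply: rankL_not_spanned; rewrite umin // size_rem // prednK.
rewrite rankL_cons (sum_of x) // -(sum_of y) // /spanL big_seq1 genmxE submx_refl addn0.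
by rewrite ltnS rankL_le_size.
Qed.
End SpansOverF2.

Lemma rankL_map (T1 T2 : eqType) n (phi : T2 -> 'rV['F_2]_n) (h : T1 -> T2) L :
  rankL (phi \o h) L = rankL phi (map h L).
Proof. by rewrite /rankL /spanL big_map. Qed.

Section Witnesses.
Variable T : eqType.
Implicit Types (g : seq T -> nat) (B : seq T).

Definition fundamental g B x : bool :=
  [&& uniq (x :: B), g B == size B, g (x :: B) == size B
    & all (fun z => g (x :: rem z B) == size B) B].

(* Two non-parallel points with the same fundamental circuit; binary
   matroids have no such pair. *)
Definition nonbinary_witness g B x y : bool :=
  [&& fundamental g B x, fundamental g B y, x != y & g [:: x; y] == 2].

End Witnesses.

Section BinaryMatroids.
Variable T : finType.
Implicit Types (G : {set T}) (f : {set T} -> nat) (g : seq T -> nat).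

Lemma binary_ext G f f' : binary G f' -> (forall X, f X = f' X) -> binary G f.
Proof. by move=> [n [phi rep]] ff'; exists n, phi => X XG; rewrite ff' rep. Qed.

Lemma con_rank_minor f e X : con_rank f e X = minor_rank f [set e] X.
Proof. by rewrite /con_rank /minor_rank setUC. Qed.

Lemma binary_rankL G f n (phi : T -> 'rV['F_2]_n) :
  (forall X : {set T}, X \subset G -> f X = \rank (\sum_(x in X) <<phi x>>)%MS) ->
  forall L, uniq L -> {subset L <= G} -> f [set:: L] = rankL phi L.
Proof.
move=> rep L uL LG; rewrite rep; last by apply/subsetP => x; rewrite inE => /LG.
by rewrite /rankL /spanL big_uniq //; congr (\rank _); apply: eq_bigl => x; rewrite inE.
Qed.

Lemma binary_no_witness G f g B x y : binary G f ->
  (forall L, f [set:: L] = g L) -> {subset x :: y :: B <= G} ->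
  ~~ nonbinary_witness g B x y.
Proof.
move=> [n [phi rep]] fg xyBG; apply/negP.
have [xG yG] : x \in G /\ y \in G by split; apply: xyBG; rewrite !inE eqxx ?orbT.
have BG : {subset B <= G} by move=> z zB; apply: xyBG; rewrite !inE zB !orbT.
have consG u L : u \in G -> {subset L <= G} -> {subset u :: L <= G}.
  by move=> uG LG w; rewrite inE => /predU1P [->|/LG].
have rk L : uniq L -> {subset L <= G} -> g L = rankL phi L.
  by move=> uL LG; rewrite -fg (binary_rankL rep).
have circuit u : u \in G -> fundamental g B u ->
    [/\ uniq B, rankL phi (u :: B) = rankL phi B
      & {in B, forall z, rankL phi (u :: rem z B) = size B}].
  move=> uG /and4P [uuB /eqP gB /eqP guB /allP umin]; have [uNB uB] := andP uuB.
  split=> // [|z zB]; first by rewrite -(rk _ uuB (consG _ _ uG BG)) -(rk _ uB BG) gB guB.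
  have uNrem : u \notin rem z B by apply: contra uNB => /mem_rem.
  rewrite -rk ?(eqP (umin z zB)) //= ?uNrem ?rem_uniq //.
  by apply: consG uG _ => w /mem_rem /BG.
case/and4P => /(circuit x xG) [uB xB xmin] /(circuit y yG) [_ yB ymin] xy /eqP gxy.
have := same_circuit_parallel uB xB yB xmin ymin.
by rewrite -rk ?gxy //= ?inE ?xy // => w; rewrite !inE => /orP [] /eqP ->.
Qed.

Lemma witnesses_not_classZ (E : {set T}) (f : {set T} -> nat) (g : seq T -> nat)
    e B x y B' x' y' :
  (forall L, f [set:: L] = g L) -> e \in E ->
  {subset x :: y :: B <= E :\ e} -> {subset x' :: y' :: B' <= E :\ e} ->
  nonbinary_witness g B x y ->
  nonbinary_witness (fun L => g (e :: L) - g [:: e]) B' x' y' -> ~ classZ E f.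
Proof.
move=> fg eE sub sub' del_wit con_wit /(_ e eE) [del_bin|con_bin].
  by move: del_wit; apply/negP; apply: binary_no_witness del_bin fg sub.
move: con_wit; apply/negP; apply: binary_no_witness con_bin _ sub' => L.
have set1E : [set e] = [set:: [:: e]] by rewrite set_cons set_nil setU0.
by rewrite /con_rank -set_cons set1E !fg.
Qed.
End BinaryMatroids.

(* Subsets of 'I_6 are coded by predicates on nat, of which only the values
   on 0..5 matter; rank functions on such codes compute by vm_compute. *)
Definition ord6 (i : nat) : 'I_6 := Ordinal (ltn_pmod i (isT : 0 < 6)).
Definition ind (X : {set 'I_6}) : nat -> bool := fun i => ord6 i \in X.

Definition ext6 (rn : (nat -> bool) -> nat) : Prop :=
  forall p q, {in iota 0 6, p =1 q} -> rn p = rn q.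

Lemma ord6_val (x : 'I_6) : ord6 (val x) = x.
Proof. by apply: val_inj; rewrite /= modn_small. Qed.

Lemma val_ord6 i : i \in iota 0 6 -> val (ord6 i) = i.
Proof. by rewrite mem_iota /= => lt_i6; rewrite modn_small. Qed.

Lemma ind_val X (x : 'I_6) : ind X (val x) = (x \in X).
Proof. by rewrite /ind ord6_val. Qed.

Lemma mem_iota6 (x : 'I_6) : val x \in iota 0 6.
Proof. by rewrite mem_iota /=. Qed.

Lemma enum_ind (X : {set 'I_6}) : [seq val x | x <- enum X] = filter (ind X) (iota 0 6).
Proof.
rewrite -val_enum_ord filter_map enumT; congr map.
by apply: eq_filter => x; rewrite /ind /= ord6_val.
Qed.

Lemma card_ind (X : {set 'I_6}) : #|X| = count (ind X) (iota 0 6).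
Proof. by rewrite cardE -(size_map val) enum_ind size_filter. Qed.

Fixpoint words (A : Type) (alph : seq A) (n : nat) : seq (seq A) :=
  if n is n'.+1 then [seq a :: w | a <- alph, w <- words alph n'] else [:: [::]].

Lemma words_mem (A : eqType) (alph : seq A) n w :
  size w = n -> all (mem alph) w -> w \in words alph n.
Proof.
elim: n w => [|n IH] [|a w] //= [size_w] /andP [a_alph w_alph].
by apply/allpairsP; exists (a, w); rewrite a_alph IH.
Qed.

Definition bits6 : seq (seq bool) := words [:: false; true] 6.
Definition ind_word (X : {set 'I_6}) : seq bool := map (ind X) (iota 0 6).

Lemma ind_word_mem X : ind_word X \in bits6.
Proof. by apply: words_mem; rewrite ?size_map ?size_iota //; apply/allP => -[]. Qed.

Lemma nth_map_iota (A : Type) (a : A) (f : nat -> A) n i :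
  i < n -> nth a (map f (iota 0 n)) i = f i.
Proof. by move=> lt_in; rewrite (nth_map 0) ?size_iota // nth_iota. Qed.

Lemma nth_ind_word X : {in iota 0 6, nth false (ind_word X) =1 ind X}.
Proof. by move=> i; rewrite mem_iota => /andP [_ lt_i6]; rewrite nth_map_iota. Qed.

Lemma rank_word rn X : ext6 rn -> rn (ind X) = rn (nth false (ind_word X)).
Proof. by move=> rnE; apply: rnE => i /nth_ind_word. Qed.

Definition rank_axioms_check (rn : (nat -> bool) -> nat) : bool :=
  all (fun wX => let pX := nth false wX in
    (rn pX <= count pX (iota 0 6)) &&
    all (fun wY => let pY := nth false wY in
      (all (fun i => pX i ==> pY i) (iota 0 6) ==> (rn pX <= rn pY)) &&
      (rn (fun i => pX i || pY i) + rn (fun i => pX i && pY i) <= rn pX + rn pY))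
    bits6) bits6.

Lemma rank_axioms_check_sound rn (r : {set 'I_6} -> nat) :
  ext6 rn -> (forall X, r X = rn (ind X)) -> rank_axioms_check rn ->
  is_matroid [set: 'I_6] r.
Proof.
move=> rnE rE /allP check.
have axioms X := check _ (ind_word_mem X).
have pair_axioms X Y := allP (andP (axioms X)).2 _ (ind_word_mem Y).
have rW X : r X = rn (nth false (ind_word X)) by rewrite rE rank_word.
split=> [X _ | X Y XY _ | X Y _ _].
- have /andP [rX _] := axioms X.
  by rewrite rW card_ind -(eq_in_count (nth_ind_word X)).
- have /andP [+ _] := pair_axioms X Y; rewrite !rW => /implyP; apply.
  by apply/allP => i iI; rewrite !nth_ind_word //; apply/implyP => /(subsetP XY).
- have /andP [_] := pair_axioms X Y.
  have rn_op op : rn (fun i => op (nth false (ind_word X) i) (nth false (ind_word Y) i))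
      = rn (fun i => op (ind X i) (ind Y i)).
    by apply: rnE => i iI; rewrite !nth_ind_word.
  have rn_set Z op : (forall i, ind Z i = op (ind X i) (ind Y i)) ->
      r Z = rn (fun i => op (ind X i) (ind Y i)).
    by move=> ZE; rewrite rE; apply: rnE => i _; rewrite ZE.
  rewrite (rn_op orb) (rn_op andb) -!rW -(rn_set (X :|: Y)) -?(rn_set (X :&: Y)) //.
  all: by move=> i; rewrite /ind inE.
Qed.

Definition bvec := (bool * bool * bool)%type.
Definition bv0 : bvec := (false, false, false).
Definition bvadd (a b : bvec) : bvec :=
  (xorb a.1.1 b.1.1, xorb a.1.2 b.1.2, xorb a.2 b.2).
Definition row_of (a : bvec) : 'rV['F_2]_3 :=
  \row_(i < 3) (nth false [:: a.1.1; a.1.2; a.2] i)%:R%R.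

Lemma row_of_add a b : row_of (bvadd a b) = (row_of a + row_of b)%R.
Proof.
apply/rowP => i; rewrite !mxE; case: a b => [[a1 a2] a3] [[b1 b2] b3].
by case: i => [[|[|[|i]]] lt_i3] //=;
  [case: a1; case: b1 | case: a2; case: b2 | case: a3; case: b3] => //; apply/eqP.
Qed.

Lemma row_of_eq0 a : (row_of a == 0%R) = (a == bv0).
Proof.
case: a => [[a1 a2] a3]; apply/eqP/eqP => [/rowP a0 | [-> -> ->]]; last first.
  by apply/rowP => -[[|[|[|i]]] lt_i3]; rewrite !mxE.
have := a0 ord0; have := a0 (@Ordinal 3 1 isT); have := a0 (@Ordinal 3 2 isT).
by rewrite !mxE /=; case: a1 {a0}; case: a2; case: a3 => // /eqP.
Qed.

Fixpoint in_bspan (a : bvec) (s : seq bvec) : bool :=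
  if s is b :: s' then in_bspan a s' || in_bspan (bvadd a b) s' else a == bv0.

Fixpoint bspan_rank (s : seq bvec) : nat :=
  if s is b :: s' then bspan_rank s' + ~~ in_bspan b s' else 0.

Lemma in_bspanE s a : (row_of a <= spanL row_of s)%MS = in_bspan a s.
Proof.
elim: s a => [|b s IH] a; first by rewrite /spanL big_nil submx0 row_of_eq0.
by rewrite spanL_cons sub_line_adds -row_of_add !IH.
Qed.

Lemma bspan_rankE s : rankL row_of s = bspan_rank s.
Proof.
elim: s => [|b s IH]; first by rewrite /rankL /spanL big_nil mxrank0.
by rewrite rankL_cons in_bspanE IH.
Qed.

(* A candidate binary representation of the restriction of a rank function rn
   to the elements satisfying g: pick a greedy basis, send basis elements to
   unit vectors and every other element to the sum of the unit vectors of
   its fundamental circuit.  Only the check below matters for soundness. *)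
Definition unit_bvec (k : nat) : bvec :=
  match k with 0 => (true, false, false) | 1 => (false, true, false)
  | 2 => (false, false, true) | _ => bv0 end.

Definition greedy_basis (rn : (nat -> bool) -> nat) (g : nat -> bool) : seq nat :=
  foldl (fun B i => if g i && (rn (mem B) < rn (mem (i :: B))) then rcons B i else B)
    [::] (iota 0 6).

Definition std_rep rn g : seq bvec :=
  let B := greedy_basis rn g in
  map (fun x => if x \in B then unit_bvec (index x B) else if g x then
     foldr bvadd bv0 [seq unit_bvec (index b B) | b <- B &
        rn (fun j => (j == x) || ((j \in B) && (j != b))) == size B]
     else bv0) (iota 0 6).

Definition represents rn g : bool :=
  let rep := std_rep rn g in
  all (fun w => all (fun i => nth false w i ==> g i) (iota 0 6) ==>
      (rn (nth false w) == bspan_rank (map (nth bv0 rep) (filter (nth false w) (iota 0 6)))))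
    bits6.

Lemma represents_sound rn g (G : {set 'I_6}) : ext6 rn -> represents rn g ->
  (forall x, x \in G -> g (val x)) -> binary G (fun X => rn (ind X)).
Proof.
move=> rnE /allP rep_ok Gg; set rep := std_rep rn g.
exists 3, (row_of \o nth bv0 rep \o val) => X XG.
have -> : \rank (\sum_(x in X) <<(row_of \o nth bv0 rep \o val) x>>)%MS
    = rankL (row_of \o nth bv0 rep \o val) (enum X).
  by rewrite /rankL /spanL big_enum.
rewrite rankL_map rankL_map enum_ind bspan_rankE.
have /implyP rep_X := rep_ok _ (ind_word_mem X).
rewrite -(rank_word _ rnE) (eq_in_filter (nth_ind_word X)) in rep_X.
apply/eqP/rep_X/allP => i iI; rewrite nth_ind_word //.
by apply/implyP => /(subsetP XG) /Gg; rewrite val_ord6.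
Qed.

(* The rank of the contraction by a coded set pC (deletions being implicit
   in the ground set), at the level of codes. *)
Definition nminor (rn : (nat -> bool) -> nat) (pC p : nat -> bool) : nat :=
  rn (fun i => p i || pC i) - rn pC.

Lemma ext6_nminor rn pC : ext6 rn -> ext6 (nminor rn pC).
Proof. by move=> rnE p q pq; rewrite /nminor (rnE _ (fun i => q i || pC i)) // => i /pq ->. Qed.

Lemma nminorE rn (r : {set 'I_6} -> nat) C pC :
  ext6 rn -> (forall X, r X = rn (ind X)) -> {in iota 0 6, pC =1 ind C} ->
  forall X, minor_rank r C X = nminor rn pC (ind X).
Proof.
move=> rnE rE pCE X; rewrite /minor_rank /nminor !rE.
congr (_ - _); apply: rnE => i iI; rewrite ?pCE //.
by rewrite /ind inE.
Qed.

(* The ternary word t codes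
   (C, D): t_i is 1 on C, 2 on D and 0 on the ground set of the minor. *)
Definition minors_check (rn : (nat -> bool) -> nat) : bool :=
  all (fun t =>
    let pC i := nth 0 t i == 1 in
    has (fun d => d != 0) t ==>
    all (fun e => (nth 0 t e == 0) ==>
       let g i := (nth 0 t i == 0) && (i != e) in
       represents (nminor rn pC) g || represents (nminor (nminor rn pC) (fun i => i == e)) g)
      (iota 0 6))
  (words [:: 0; 1; 2] 6).

Definition minor_code (C D : {set 'I_6}) : seq nat :=
  map (fun i => if ind C i then 1 else if ind D i then 2 else 0) (iota 0 6).

Lemma minor_code_mem C D : minor_code C D \in words [:: 0; 1; 2] 6.
Proof.
apply: words_mem; first by rewrite size_map size_iota.
by apply/allP => _ /mapP [i _ ->]; case: (ind C i); case: (ind D i).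
Qed.

Lemma nth_minor_code C D (x : 'I_6) :
  nth 0 (minor_code C D) (val x) = if x \in C then 1 else if x \in D then 2 else 0.
Proof. by rewrite nth_map_iota //= !ind_val. Qed.

Lemma minor_code_C C D : {in iota 0 6, (fun i => nth 0 (minor_code C D) i == 1) =1 ind C}.
Proof.
move=> i iI; rewrite /= -[i](val_ord6 iI) nth_minor_code ind_val.
by case: (ord6 i \in C) => //; case: (ord6 i \in D).
Qed.

Lemma minor_code_ground C D (x : 'I_6) :
  (nth 0 (minor_code C D) (val x) == 0) = (x \notin C) && (x \notin D).
Proof. by rewrite nth_minor_code; case: (x \in C); case: (x \in D). Qed.

Lemma minor_code_proper C D : C :|: D != set0 -> has (fun d => d != 0) (minor_code C D).
Proof.
case/set0Pn => x xCD; apply/hasP; exists (nth 0 (minor_code C D) (val x)).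
  by apply: mem_nth; rewrite size_map size_iota ltn_ord.
by rewrite minor_code_ground negb_and !negbK -in_setU.
Qed.

Lemma minors_check_sound rn (r : {set 'I_6} -> nat) :
  ext6 rn -> (forall X, r X = rn (ind X)) -> minors_check rn ->
  forall C D : {set 'I_6}, C \subset [set: 'I_6] -> D \subset [set: 'I_6] ->
  [disjoint C & D] -> C :|: D != set0 ->
  classZ (minor_ground [set: 'I_6] C D) (minor_rank r C).
Proof.
move=> rnE rE /allP check C D _ _ _ proper e.
rewrite /minor_ground !inE negb_or => /andP [/andP [eNC eND] _].
have := check _ (minor_code_mem C D); rewrite minor_code_proper //.
move=> /allP /(_ _ (mem_iota6 e)); rewrite minor_code_ground eNC eND /=.
set pC := fun i => _ == 1; set g := fun i => _ && _.
have ground x : x \in [set: 'I_6] :\: (C :|: D) :\ e -> g (val x).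
  by rewrite !inE negb_or /g minor_code_ground val_eqE => /andP [-> /andP [-> _]].
have minorE := nminorE rnE rE (minor_code_C C D).
have eE : {in iota 0 6, (fun i => i == val e) =1 ind [set e]}.
  by move=> i iI; rewrite /ind inE -val_eqE val_ord6.
case/orP => [del|con]; [left|right].
- exact: binary_ext (represents_sound (ext6_nminor _ rnE) del ground) minorE.
- apply: binary_ext (represents_sound (ext6_nminor _ (ext6_nminor _ rnE)) con ground) _.
  by move=> X; rewrite con_rank_minor (nminorE (ext6_nminor _ rnE) minorE eE).
Qed.

Definition list_rank (rn : (nat -> bool) -> nat) (L : seq 'I_6) : nat :=
  rn (fun i => ord6 i \in L).

Lemma list_rankE rn (r : {set 'I_6} -> nat) :
  ext6 rn -> (forall X, r X = rn (ind X)) -> forall L, r [set:: L] = list_rank rn L.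
Proof. by move=> rnE rE L; rewrite rE; apply: rnE => i _; rewrite /ind inE. Qed.

Lemma coded_not_classZ rn (r : {set 'I_6} -> nat) e B x y B' x' y' :
  ext6 rn -> (forall X, r X = rn (ind X)) ->
  e \notin x :: y :: B -> e \notin x' :: y' :: B' ->
  nonbinary_witness (list_rank rn) B x y ->
  nonbinary_witness (fun L => list_rank rn (e :: L) - list_rank rn [:: e]) B' x' y' ->
  ~ classZ [set: 'I_6] r.
Proof.
have avoid L : e \notin L -> {subset L <= [set: 'I_6] :\ e}.
  by move=> eNL z zL; rewrite !inE andbT; apply: contraNneq eNL => <-.
move=> rnE rE /avoid sub /avoid sub'.
exact: witnesses_not_classZ (list_rankE rnE rE) (in_setT e) sub sub'.
Qed.

Lemma checked_excluded_minor rn (r : {set 'I_6} -> nat) :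
  ext6 rn -> (forall X, r X = rn (ind X)) -> rank_axioms_check rn ->
  ~ classZ [set: 'I_6] r -> minors_check rn -> excluded_minor (@classZ _) [set: 'I_6] r.
Proof.
move=> rnE rE axioms notZ minors; split => //.
  exact: rank_axioms_check_sound rnE rE axioms.
exact: minors_check_sound rnE rE minors.
Qed.

Definition is_code_of (l : seq nat) (p : nat -> bool) : bool :=
  all (fun i => p i == (i \in l)) (iota 0 6).
Definition nrank_U36 (p : nat -> bool) : nat := minn (count p (iota 0 6)) 3.
Definition nrank_P6 (p : nat -> bool) : nat :=
  if is_code_of [:: 0; 1; 2] p then 2 else nrank_U36 p.
Definition nrank_Q6 (p : nat -> bool) : nat :=
  if is_code_of [:: 0; 1; 2] p || is_code_of [:: 2; 3; 4] p then 2 else nrank_U36 p.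

Lemma ext6_is_code_of l p q : {in iota 0 6, p =1 q} -> is_code_of l p = is_code_of l q.
Proof. by move=> pq; apply: eq_in_all => i /pq ->. Qed.

Lemma ext6_U36 : ext6 nrank_U36.
Proof. by move=> p q pq; rewrite /nrank_U36 (eq_in_count pq). Qed.

Lemma ext6_P6 : ext6 nrank_P6.
Proof. by move=> p q pq; rewrite /nrank_P6 (ext6_is_code_of _ pq) (ext6_U36 pq). Qed.

Lemma ext6_Q6 : ext6 nrank_Q6.
Proof. by move=> p q pq; rewrite /nrank_Q6 !(ext6_is_code_of _ pq) (ext6_U36 pq). Qed.

Lemma eq_set_code X S l :
  {in iota 0 6, ind S =1 (fun i => i \in l)} -> (X == S) = is_code_of l (ind X).
Proof.
move=> SE; apply/eqP/allP => [-> i iI | Xl]; first by rewrite SE.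
apply/setP => x; have := Xl _ (mem_iota6 x).
by rewrite -SE ?mem_iota6 // !ind_val => /eqP.
Qed.

Lemma triple_code a b c : a < 6 -> b < 6 -> c < 6 ->
  {in iota 0 6, ind [set inord a; inord b; inord c] =1 (fun i => i \in [:: a; b; c])}.
Proof. by move=> lt_a6 lt_b6 lt_c6 i iI; rewrite /ind !inE -!val_eqE val_ord6 //= !inordK // orbA. Qed.

Lemma rank_U36E X : rank_U36 X = nrank_U36 (ind X).
Proof. by rewrite /rank_U36 card_ind. Qed.

Lemma rank_P6E X : rank_P6 X = nrank_P6 (ind X).
Proof. by rewrite /rank_P6 /nrank_P6 (eq_set_code X (@triple_code 0 1 2 isT isT isT)) card_ind. Qed.

Lemma rank_Q6E X : rank_Q6 X = nrank_Q6 (ind X).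
Proof.
by rewrite /rank_Q6 /nrank_Q6 (eq_set_code X (@triple_code 0 1 2 isT isT isT))
  (eq_set_code X (@triple_code 2 3 4 isT isT isT)) card_ind.
Qed.

(* Each proof names an element e, then for M \ e an independent list and two
   non-parallel points spanned minimally by it, and likewise for M / e. *)
Lemma U36_excluded : excluded_minor (@classZ _) [set: 'I_6] rank_U36.
Proof.
apply: (checked_excluded_minor ext6_U36 rank_U36E); [by vm_compute | | by vm_compute].
by apply: (@coded_not_classZ _ _ (ord6 0) [:: ord6 1; ord6 2; ord6 3] (ord6 4) (ord6 5)
  [:: ord6 1; ord6 2] (ord6 3) (ord6 4) ext6_U36 rank_U36E); vm_compute.
Qed.

Lemma P6_excluded : excluded_minor (@classZ _) [set: 'I_6] rank_P6.
Proof.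
apply: (checked_excluded_minor ext6_P6 rank_P6E); [by vm_compute | | by vm_compute].
by apply: (@coded_not_classZ _ _ (ord6 5) [:: ord6 2; ord6 3; ord6 4] (ord6 0) (ord6 1)
  [:: ord6 0; ord6 1] (ord6 2) (ord6 3) ext6_P6 rank_P6E); vm_compute.
Qed.

Lemma Q6_excluded : excluded_minor (@classZ _) [set: 'I_6] rank_Q6.
Proof.
apply: (checked_excluded_minor ext6_Q6 rank_Q6E); [by vm_compute | | by vm_compute].
by apply: (@coded_not_classZ _ _ (ord6 0) [:: ord6 4; ord6 1; ord6 5] (ord6 2) (ord6 3)
  [:: ord6 1; ord6 3] (ord6 4) (ord6 5) ext6_Q6 rank_Q6E); vm_compute.
Qed.

Theorem lemma2p11 :
  [/\ excluded_minor (@classZ _) [set: 'I_6] rank_Q6,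
      excluded_minor (@classZ _) [set: 'I_6] rank_P6
    & excluded_minor (@classZ _) [set: 'I_6] rank_U36].
Proof. by split; [exact: Q6_excluded | exact: P6_excluded | exact: U36_excluded]. Qed.
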